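(* Let $\underline{t}$ be an increment array of size $s$ for $n$ agents, let $y\in\{1,\ldots,n\}$, and write $C=C(y,\underline{t})=\{x_1,x_2,\ldots,x_s\}$ with $x_1<x_2<\cdots<x_s$. Then there is an increment array $\underline{u}=\langle u_0,\ldots,u_{s-1}\rangle$ with $\underline{t}\approx\underline{u}$ such that $C(x_1,\underline{u})=C$ and $C(x_1,\underline{u})$ generates the elements of $C$ in strictly increasing order, i.e. \[x_i\in\Big\{x_1+\sum_{k=0}^{i-2}u_k+i-1,\; x_1+\sum_{k=0}^{i-2}u_k+i-1-n\Big\}\quad\text{for all }2\le i\le s.\]
   Context: Agent identifiers are $\{1,\ldots,n\}$, arithmetic on identifiers is modulo $n$ with representatives in $\{1,\ldots,n\}$ (a value $0$ is replaced by $n$). An increment array (IA) of size $s$ ($1\le s\le n$) for $n$ agents is a tuple $\underline{t}=\langle t_0,\ldots,t_{s-1}\rangle$ of non-negative integers with $\sum t_i=n-s$. Cumulative increments: $\varphi_1=0$, $\varphi_i=\sum_{k=0}^{i-2}(t_k+1)$ for $2\le i\le s+1$. The coalition generated from $x$ is $C(x,\underline{t})=\{x\}\cup\bigcup_{i=2}^{s}\{(x+\varphi_i)\bmod n\}$ (residues in $\{1,\ldots,n\}$). Two IAs of the same size are equivalent, $\underline{t}\approx\underline{u}$, if $\underline{u}$ is a circular shift of $\underline{t}$: there is $0\le k\le s-1$ with $\langle u_0,\ldots,u_{s-1}\rangle=\langle t_k,\ldots,t_{s-1},t_0,\ldots,t_{k-1}\rangle$. *)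

From mathcomp Require Import all_boot.
Set Implicit Arguments. Unset Strict Implicit. Unset Printing Implicit Defensive.

Definition IA (n s : nat) (t : seq nat) : bool :=
  [&& 1 <= s <= n, size t == s & sumn t == n - s].

Definition phi (t : seq nat) (i : nat) : nat :=
  \sum_(0 <= k < i.-1) (nth 0 t k).+1.

Definition resid (n a : nat) : nat :=
  if a %% n == 0 then n else a %% n.

Definition coalition (n x : nat) (t : seq nat) : seq nat :=
  x :: [seq resid n (x + phi t i) | i <- iota 2 (size t).-1].

Definition IA_equiv (t u : seq nat) : Prop :=
  size u = size t /\ exists2 k, k < size t & u = rot k t.

From mathcomp Require Import all_boot zify.

Set Implicit Arguments.
Unset Strict Implicit.
Unset Printing Implicit Defensive.

(* Every element of C(y,t) is y + phi_cyc t r reduced mod n for some r < s, where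
   phi_cyc t is the cumulative increment sequence of the periodic extension of t;
   it grows by exactly n per period.  Pick the index j at which this residue z is
   smallest and let u = rot j t.  The elements of C(z,u) are then z plus the
   increments phi_cyc t (j + m) - phi_cyc t j, m < s, and none of them exceeds n:
   wrapping around past n would give an element of C(y,t) below z.  Hence C(z,u)
   enumerates C(y,t) without any reduction and in strictly increasing order, and
   z = x_1. *)

Lemma nth_rot (T : Type) (x0 : T) (s : seq T) j k : j <= size s -> k < size s ->
  nth x0 (rot j s) k = nth x0 s ((j + k) %% size s).
Proof.
move=> j_le k_lt; rewrite nth_cat size_drop nth_drop.
case: ifP => [jk_lt|jk_ge]; first by rewrite modn_small //; lia.
rewrite nth_take; last by lia.
have -> : j + k = (j + k - size s) + size s by lia.
by rewrite modnDr modn_small; [congr nth; lia | lia].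
Qed.

Lemma phiE (t : seq nat) i : phi t i = \sum_(0 <= k < i.-1) nth 0 t k + i.-1.
Proof.
rewrite /phi (eq_bigr (fun k => nth 0 t k + 1)) => [|k _]; last by rewrite addn1.
by rewrite big_split /= sum_nat_const_nat subn0 muln1.
Qed.

Lemma ltn_phiS (t : seq nat) i k : i < k -> phi t i.+1 < phi t k.+1.
Proof.
move=> ik; rewrite /phi /= [X in _ < X](@big_cat_nat _ _ _ i) //= ?(ltnW ik) //.
by rewrite -[X in X < _]addn0 ltn_add2l big_ltn.
Qed.

Section Residues.

Variable n : nat.

Lemma resid_id a : 1 <= a <= n -> resid n a = a.
Proof.
move=> /andP[a_gt0 a_le]; rewrite /resid.
have [->|a_ne] := eqVneq a n; first by rewrite modnn eqxx.
by rewrite modn_small ?ltn_neqAle ?a_ne //; case: a a_gt0 {a_le a_ne}.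
Qed.

Lemma resid_eqmod a b : a = b %[mod n] -> resid n a = resid n b.
Proof. by rewrite /resid => ->. Qed.

Lemma resid_range a : 0 < n -> 1 <= resid n a <= n.
Proof.
move=> n_gt0; rewrite /resid; case: eqP => [_|]; first by rewrite n_gt0 leqnn.
by have := ltn_pmod a n_gt0; lia.
Qed.

Lemma resid_mod a : resid n a = a %[mod n].
Proof. by rewrite /resid; case: eqP => [->|_]; rewrite ?modnn ?modn_mod. Qed.

Lemma resid_addl a b : resid n (resid n a + b) = resid n (a + b).
Proof. by apply: resid_eqmod; rewrite -modnDml resid_mod modnDml. Qed.

Lemma resid_sub a : n < a <= n + n -> resid n a = a - n.
Proof.
move=> /andP[n_lt a_le]; rewrite -[RHS]resid_id; last by lia.
by apply: resid_eqmod; rewrite -[in LHS](subnK (ltnW n_lt)) modnDr.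
Qed.

End Residues.

Section CyclicIncrements.

Variable t : seq nat.
Local Notation s := (size t).

Definition phi_cyc (m : nat) : nat := \sum_(0 <= k < m) (nth 0 t (k %% s)).+1.

Lemma phi_cycD a b :
  phi_cyc (a + b) = phi_cyc a + \sum_(0 <= k < b) (nth 0 t ((a + k) %% s)).+1.
Proof.
rewrite /phi_cyc (@big_cat_nat _ _ _ a) ?leq_addr //=; congr (_ + _).
by rewrite -{1}[a]add0n big_addn addKn; apply: eq_bigr => k _; rewrite addnC.
Qed.

Lemma leq_phi_cycD a b : phi_cyc a + b <= phi_cyc (a + b).
Proof.
rewrite phi_cycD leq_add2l -[X in X <= _]subn0 -[X in X <= _]muln1 -sum_nat_const_nat.
by apply: leq_sum => k _.
Qed.

Lemma phi_phi_cyc i : i <= s -> phi t i.+1 = phi_cyc i.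
Proof.
move=> i_le; apply: eq_big_nat => k /andP[_ k_lt].
by rewrite modn_small // (leq_trans k_lt).
Qed.

Lemma phi_cyc_size : phi_cyc s = sumn t + s.
Proof. by rewrite -phi_phi_cyc // phiE sumnE [in RHS](big_nth 0). Qed.

Lemma phi_cycMD q r : phi_cyc (q * s + r) = q * phi_cyc s + phi_cyc r.
Proof.
elim: q => [|q IHq]; first by rewrite !mul0n.
rewrite !mulSn -[in LHS]addnA -[in RHS]addnA phi_cycD -IHq; congr (_ + _).
by apply: eq_bigr => k _; rewrite modnDl.
Qed.

Lemma phi_rot j m : j <= s -> m <= s -> phi (rot j t) m.+1 = phi_cyc (j + m) - phi_cyc j.
Proof.
move=> j_le m_le; rewrite phi_cycD addKn; apply: eq_big_nat => k /andP[_ k_lt].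
by rewrite nth_rot // (leq_trans k_lt).
Qed.

End CyclicIncrements.

Lemma sort_subset_sorted_ltn (L C : seq nat) :
  sorted ltn L -> {subset L <= C} -> size C <= size L -> sort leq C = L.
Proof.
rewrite ltn_sorted_uniq_leq => /andP[L_uniq L_sorted] LC size_le.
have [_ eq_LC] := uniq_min_size L_uniq LC size_le.
rewrite -[RHS](sorted_sort leq_trans L_sorted).
apply/(perm_sortP leq_total leq_trans anti_leq)/uniq_perm => //.
exact: leq_size_uniq L_uniq LC size_le.
Qed.

Lemma size_coalition n x t : 0 < size t -> size (coalition n x t) = size t.
Proof. by move=> t_gt0; rewrite /= size_map size_iota prednK. Qed.

Lemma coalitionE n x t : 0 < size t -> 1 <= x <= n ->
  coalition n x t = [seq resid n (x + phi t r.+1) | r <- iota 0 (size t)].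
Proof.
case: t => // a t' _ x_range; rewrite /coalition /= -[2]/(1 + 1) iotaDl -map_comp.
by rewrite /phi big_geq // addn0 resid_id.
Qed.

Section MinimalRotation.

Variables (n : nat) (t : seq nat).
Hypothesis t_gt0 : 0 < size t.
Hypothesis sum_t : sumn t + size t = n.

Lemma resid_phi_cyc_mod x m :
  resid n (x + phi_cyc t m) = resid n (x + phi_cyc t (m %% size t)).
Proof.
apply: resid_eqmod.
by rewrite {1}(divn_eq m (size t)) phi_cycMD phi_cyc_size sum_t addnCA modnMDl.
Qed.

Lemma phi_cyc_window j m : m < size t -> phi_cyc t (j + m) - phi_cyc t j < n.
Proof.
move=> m_lt; have := leq_phi_cycD t (j + m) (size t - m).
have := leq_phi_cycD t j m.
have -> : j + m + (size t - m) = 1 * size t + j by lia.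
by rewrite phi_cycMD phi_cyc_size sum_t mul1n; lia.
Qed.

Variables y j : nat.
Hypothesis y_range : 1 <= y <= n.
Hypothesis j_lt : j < size t.
Local Notation z := (resid n (y + phi_cyc t j)).

Lemma resid_rot m : m < size t ->
  resid n (z + phi (rot j t) m.+1) = resid n (y + phi_cyc t ((j + m) %% size t)).
Proof.
move=> m_lt; rewrite resid_addl phi_rot ?(ltnW j_lt) ?(ltnW m_lt) // -resid_phi_cyc_mod.
by congr (resid n _); have := leq_phi_cycD t j m; lia.
Qed.

Hypothesis j_min : forall r, r < size t -> z <= resid n (y + phi_cyc t r).

Lemma rot_no_wrap m : m < size t -> z + phi (rot j t) m.+1 <= n.
Proof.
move=> m_lt; rewrite leqNgt; apply/negP => wrap.
have n_gt0 : 0 < n by lia.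
have z_le : z <= n by have /andP[] := resid_range (y + phi_cyc t j) n_gt0.
have window := phi_cyc_window j m_lt.
rewrite -phi_rot ?(ltnW j_lt) ?(ltnW m_lt) // in window.
have := j_min (ltn_pmod (j + m) t_gt0).
by rewrite -resid_rot // [X in _ <= X]resid_sub; lia.
Qed.

Lemma resid_rot_min m : m < size t ->
  resid n (z + phi (rot j t) m.+1) = z + phi (rot j t) m.+1.
Proof.
move=> m_lt; have /andP[z_gt0 _] : 1 <= z <= n by apply: resid_range; lia.
by rewrite resid_id //; have := rot_no_wrap m_lt; lia.
Qed.

Lemma coalition_rot_min :
  coalition n z (rot j t) = [seq z + phi (rot j t) m.+1 | m <- iota 0 (size t)].
Proof.
rewrite coalitionE ?size_rot ?resid_range //; last by lia.
by apply/eq_in_map => m; rewrite mem_iota => /andP[_ /resid_rot_min].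
Qed.

Lemma sort_coalition_min : sort leq (coalition n y t) = coalition n z (rot j t).
Proof.
apply: sort_subset_sorted_ltn; last by rewrite !size_coalition ?size_rot.
  rewrite coalition_rot_min sorted_map.
  by apply: sub_sorted (iota_ltn_sorted 0 _) => a b /= /ltn_phiS; rewrite ltn_add2l.
move=> w; rewrite coalition_rot_min => /mapP[m]; rewrite mem_iota => /andP[_ m_lt] ->.
rewrite -resid_rot_min // resid_rot // -phi_phi_cyc ?(ltnW (ltn_pmod _ t_gt0)) //.
rewrite coalitionE //.
by apply: map_f; rewrite mem_iota ltn_pmod.
Qed.

End MinimalRotation.

Theorem lemma4 (n s : nat) (t : seq nat) (y : nat) :
  IA n s t -> 1 <= y <= n ->
  let xs := sort leq (coalition n y t) in
  let x := fun i => nth 0 xs i.-1 in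
  exists u : seq nat,
    [/\ IA n s u, IA_equiv t u,
        coalition n (x 1) u =i coalition n y t &
        forall i, 2 <= i <= s ->
          let a := x 1 + \sum_(0 <= k < i - 1) nth 0 u k + (i - 1) in
          x i = a \/ x i + n = a].
Proof.
move=> /and3P[/andP[s_gt0 s_le] /eqP size_t /eqP sum_t] y_range xs x.
have t_gt0 : 0 < size t by rewrite size_t.
have sum_size : sumn t + size t = n by rewrite sum_t size_t subnK.
pose start (r : 'I_(size t)) := resid n (y + phi_cyc t r).
have [j _ j_min] := @arg_minnP _ (Ordinal t_gt0) xpredT start isT.
set z := start j.
have z_min r : r < size t -> z <= resid n (y + phi_cyc t r).
  by move=> r_lt; apply: (j_min (Ordinal r_lt)).
have sort_C := sort_coalition_min t_gt0 sum_size y_range (ltn_ord j) z_min.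
have rot_C := coalition_rot_min t_gt0 sum_size y_range (ltn_ord j) z_min.
have x_nth i : 1 <= i <= s -> x i = z + phi (rot j t) i.
  case: i => // i i_range; rewrite /x /xs sort_C rot_C.
  by rewrite (nth_map 0) ?nth_iota ?size_iota //; lia.
have x1 : x 1 = z by rewrite x_nth // /phi big_geq // addn0.
exists (rot j t); split.
- by rewrite /IA size_rot sumn_rot size_t sum_t s_gt0 s_le !eqxx.
- by split; [rewrite size_rot | exists j].
- by move=> w; rewrite x1 -sort_C mem_sort.
- move=> i i_range /=; left.
  by rewrite x1 x_nth ?phiE ?subn1 ?addnA //; lia.
Qed.
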